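(* Let $F$ be an infinite family of index sets linearly ordered by $\subseteq$ such that $I_1\subsetneq I_2$ in $F$ implies $I_2\setminus I_1$ is infinite, and let $\mathcal{T}_F=\{T_I\mid I\in F\}$. If $F$ is discrete, then $\mathcal{T}_F$ is the least generating set for $\mathrm{Cl}_E(\mathcal{T}_F)$.
   Context: A predicate symbol $R$ is non-empty for a theory $T$ if $T\vdash\exists\bar x R(\bar x)$, empty otherwise. A complete theory $T$ in a predicate language is language uniform (LU) if for each arity $m$, every permutation of the set of $m$-ary symbols non-empty for $T$ preserves $T$. Let $T_0$ be a complete LU-theory in a relational language $\Sigma_0$, let $n\ge1$, and let $\{R_k\mid k\in I_0\}$, $I_0$ infinite, be the set of $n$-ary symbols of $\Sigma_0$ that are non-empty for $T_0$. Let $\Sigma'=\{R_k\mid k\in I_0\}\cup\{$symbols of $\Sigma_0$ of arity $\neq n\}$. An index set is an infinite $I\subseteq I_0$ with $|I|=|I_0|$ and $|I_0\setminus I|$ equal to the number of $n$-ary symbols of $\Sigma_0$ that are empty for $T_0$. For an index set $I$, $T_I$ is the complete $\Sigma'$-theory axiomatized by the restriction of $T_0$ to the language $\{R_k\mid k\in I\}\cup\{$symbols of arity $\ne n\}$ together with $\{\forall\bar x\neg R_l(\bar x)\mid l\in I_0\setminus I\}$. $E$-closure (over $\Sigma'$): let $E$ be a new binary symbol. The $E$-combination of a family $(\mathcal{A}_i)_i$ of $\Sigma'$-structures with disjoint universes is the $(\Sigma'\cup\{E\})$-structure on $\bigcup_iA_i$ with $E$ the equivalence relation whose classes are the $A_i$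 and each $R\in\Sigma'$ interpreted as $\bigcup_iR^{\mathcal{A}_i}$. For a set $\mathcal{T}$ of complete $\Sigma'$-theories, $\mathrm{Cl}_E(\mathcal{T})$ is the set of complete theories of the $E$-classes (as induced $\Sigma'$-structures) of structures elementarily equivalent to some $E$-combination of structures whose theories lie in $\mathcal{T}$. For an $E$-closed set $\mathcal{C}$ ($\mathrm{Cl}_E(\mathcal{C})=\mathcal{C}$), a subset $\mathcal{G}\subseteq\mathcal{C}$ is generating if $\mathrm{Cl}_E(\mathcal{G})=\mathcal{C}$; it is the least generating set if it is generating, has no proper generating subset, and is contained in every generating set. For infinite $F'\subseteq F$: $\bigcup F'$ is an (upper) accumulation point of $F'$ if $\bigcup F'\notin F'$, and $\bigcap F'$ is a (lower) accumulation point of $F'$ if $\bigcap F'\notin F'$. $F$ is discrete if no element of $F$ is an accumulation point of some infinite $F'\subseteq F$. *)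

From Stdlib Require Import List Arith.
Import ListNotations.
Set Implicit Arguments.

Inductive form (Sym : Type) : Type :=
| FRel : Sym -> list nat -> form Sym
| FEq  : nat -> nat -> form Sym
| FBot : form Sym
| FImp : form Sym -> form Sym -> form Sym
| FAll : nat -> form Sym -> form Sym.
Arguments FBot {Sym}.
Arguments FRel {Sym}.
Arguments FEq {Sym}.
Arguments FImp {Sym}.
Arguments FAll {Sym}.

Definition FNot {Sym} (p : form Sym) : form Sym := FImp p FBot.
Definition FEx {Sym} (x : nat) (p : form Sym) : form Sym :=
  FNot (FAll x (FNot p)).

Fixpoint fv {Sym} (p : form Sym) : list nat :=
  match p with
  | FRel _ xs => xs
  | FEq x y => [x; y]
  | FBot => []
  | FImp p q => fv p ++ fv q
  | FAll x p => filter (fun y => negb (Nat.eqb y x)) (fv p)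
  end.

Fixpoint wf {Sym} (ar : Sym -> nat) (L : Sym -> Prop) (p : form Sym) : Prop :=
  match p with
  | FRel R xs => L R /\ length xs = ar R
  | FEq _ _ => True
  | FBot => True
  | FImp p q => wf ar L p /\ wf ar L q
  | FAll _ p => wf ar L p
  end.

Definition sentence {Sym} (ar : Sym -> nat) (L : Sym -> Prop) (p : form Sym) :=
  wf ar L p /\ fv p = [].

Fixpoint rename {Sym} (s : Sym -> Sym) (p : form Sym) : form Sym :=
  match p with
  | FRel R xs => FRel (s R) xs
  | FEq x y => FEq x y
  | FBot => FBot
  | FImp p q => FImp (rename s p) (rename s q)
  | FAll x p => FAll x (rename s p)
  end.

Definition exR {Sym} (ar : Sym -> nat) (R : Sym) : form Sym :=
  fold_right (fun x p => FEx x p) (FRel R (seq 0 (ar R))) (seq 0 (ar R)).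
Definition allnotR {Sym} (ar : Sym -> nat) (R : Sym) : form Sym :=
  fold_right (fun x p => FAll x p) (FNot (FRel R (seq 0 (ar R)))) (seq 0 (ar R)).

Record structure (Sym : Type) := Structure {
  carrier : Type;
  point : carrier;                         (* universes are nonempty *)
  interp : Sym -> list carrier -> Prop }.
Arguments Structure {Sym}.

Definition upd {M : Type} (e : nat -> M) (x : nat) (a : M) : nat -> M :=
  fun y => if Nat.eqb y x then a else e y.

Fixpoint sat {Sym} (M : structure Sym) (e : nat -> carrier M) (p : form Sym)
  : Prop :=
  match p with
  | FRel R xs => interp M R (map e xs)
  | FEq x y => e x = e y
  | FBot => False
  | FImp p q => sat M e p -> sat M e q
  | FAll x p => forall a : carrier M, sat M (upd e x a) p
  end.

Definition holds {Sym} (M : structure Sym) (p : form Sym) : Prop :=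
  forall e, sat M e p.

Definition Th {Sym} (ar : Sym -> nat) (L : Sym -> Prop) (M : structure Sym)
  : form Sym -> Prop :=
  fun p => sentence ar L p /\ holds M p.

(** a complete theory in the language L (semantic definition: the set of
    all L-sentences true in some L-structure) *)
Definition complete_theory {Sym} (ar : Sym -> nat) (L : Sym -> Prop)
  (T : form Sym -> Prop) : Prop :=
  exists M : structure Sym, T = Th ar L M.

Definition models {Sym} (M : structure Sym) (T : form Sym -> Prop) : Prop :=
  forall p, T p -> holds M p.

(** T ⊢ p  (semantic consequence; by completeness = provability) *)
Definition entails {Sym} (T : form Sym -> Prop) (p : form Sym) : Prop :=
  forall M : structure Sym, models M T -> holds M p.

Definition elem_equiv {Sym} (ar : Sym -> nat) (L : Sym -> Prop)
  (M N : structure Sym) : Prop :=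
  forall p, sentence ar L p -> (holds M p <-> holds N p).

Definition nonempty_sym {S} (ar : S -> nat) (T : form S -> Prop) (R : S) :=
  entails T (exR ar R).

Definition bijective {A B} (f : A -> B) :=
  exists g : B -> A, (forall x, g (f x) = x) /\ (forall y, f (g y) = y).

Definition LU {S} (ar : S -> nat) (T : form S -> Prop) : Prop :=
  forall (m : nat) (sg : S -> S),
    bijective sg ->
    (forall s, ar s = m /\ nonempty_sym ar T s ->
               ar (sg s) = m /\ nonempty_sym ar T (sg s)) ->
    (forall s, ~ (ar s = m /\ nonempty_sym ar T s) -> sg s = s) ->
    forall p, T p <-> T (rename sg p).

Definition infinite {T} (A : T -> Prop) : Prop :=
  ~ exists l : list T, forall x, A x -> In x l.

Definition subset {T} (A B : T -> Prop) := forall x, A x -> B x.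

Definition equipotent {T} (A B : T -> Prop) : Prop :=
  exists f : {x | A x} -> {x | B x}, bijective f.

Section Setting.
Variables (S : Type) (ar : S -> nat) (T0 : form S -> Prop) (n : nat).

Definition I0 : S -> Prop := fun k => ar k = n /\ nonempty_sym ar T0 k.
Definition emptyN : S -> Prop := fun k => ar k = n /\ ~ nonempty_sym ar T0 k.
Definition Sigma' : S -> Prop := fun s => I0 s \/ ar s <> n.

Definition index_set (I : S -> Prop) : Prop :=
  subset I I0 /\ infinite I /\ equipotent I I0 /\
  equipotent (fun k => I0 k /\ ~ I k) emptyN.

Definition L_I (I : S -> Prop) : S -> Prop := fun s => I s \/ ar s <> n.

Definition Ax_I (I : S -> Prop) : form S -> Prop :=
  fun p => (T0 p /\ sentence ar (L_I I) p) \/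
           (exists l, I0 l /\ ~ I l /\ p = allnotR ar l).

Definition T_I (I : S -> Prop) : form S -> Prop :=
  fun p => sentence ar Sigma' p /\ entails (Ax_I I) p.

Definition T_F (F : (S -> Prop) -> Prop) : (form S -> Prop) -> Prop :=
  fun T => exists I, F I /\ T = T_I I.
End Setting.

Section EClosure.
Variables (S : Type) (ar : S -> nat) (L : S -> Prop).

(** Σ' ∪ {E}: [None] is the new binary symbol E *)
Definition arE (o : option S) : nat :=
  match o with None => 2 | Some s => ar s end.
Definition LE (o : option S) : Prop :=
  match o with None => True | Some s => L s end.

(** E-combination of (A_j)_{j∈J}; the universes are made disjoint by
    tagging (disjoint union), J nonempty (witness j0). *)
Definition Ecomb (J : Type) (A : J -> structure S) (j0 : J)
  : structure (option S) :=
  @Structure (option S) {j : J & carrier (A j)}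
    (existT _ j0 (point (A j0)))
    (fun o xs => match o with
       | None => match xs with
                 | [a; b] => projT1 a = projT1 b
                 | _ => False end
       | Some R => exists j (ys : list (carrier (A j))),
                   xs = map (fun y => existT _ j y) ys /\ interp (A j) R ys
       end).

(** the E-class of a as an induced S-structure (needs E(a,a)) *)
Definition Eclass (M : structure (option S)) (a : carrier M)
  (h : interp M None [a; a]) : structure S :=
  @Structure S {b : carrier M | interp M None [a; b]}
    (exist _ a h)
    (fun R ys => interp M (Some R) (map (@proj1_sig _ _) ys)).

Definition ClE (TT : (form S -> Prop) -> Prop) : (form S -> Prop) -> Prop :=
  fun T => exists (M : structure (option S)) (J : Type)
                  (A : J -> structure S) (j0 : J),
    (forall j, TT (Th ar L (A j))) /\
    elem_equiv arE LE M (Ecomb A j0) /\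
    exists (a : carrier M) (h : interp M None [a; a]),
      T = Th ar L (@Eclass M a h).

Definition set_eq {T} (A B : T -> Prop) := forall x, A x <-> B x.

Definition generating (C G : (form S -> Prop) -> Prop) : Prop :=
  subset G C /\ set_eq (ClE G) C.

Definition least_generating (C G : (form S -> Prop) -> Prop) : Prop :=
  generating C G /\
  (forall G', subset G' G -> (exists T, G T /\ ~ G' T) -> ~ generating C G') /\
  (forall G', generating C G' -> subset G G').
End EClosure.

Definition bigcupF {S} (F' : (S -> Prop) -> Prop) : S -> Prop :=
  fun k => exists Y, F' Y /\ Y k.
Definition bigcapF {S} (F' : (S -> Prop) -> Prop) : S -> Prop :=
  fun k => forall Y, F' Y -> Y k.

Definition discrete {S} (F : (S -> Prop) -> Prop) : Prop :=
  forall F', subset F' F -> infinite F' ->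
  forall X, F X ->
    ~ ((X = bigcupF F' /\ ~ F' X) \/ (X = bigcapF F' /\ ~ F' X)).

(* An E-class of a structure elementarily equivalent to an E-combination
   realizes only finite patterns that are realized in single components: any
   sentence together with finitely many n-ary symbols required to be nonempty
   or empty. So if T_I lies in Cl_E(G) with G ⊆ Cl_E(T_F), the set I is
   separated by the sets of nonempty n-ary symbols of the components, which
   are in turn separated by members of F. In a discrete chain this forces I to
   be the symbol set of one component: otherwise I would be the union of the
   members of F strictly below it, or the intersection of those strictly above
   it. Finally a theory of Cl_E(T_F) is determined by its nonempty n-ary
   symbols, so that component has theory T_I, which therefore lies in G. *)

From Stdlib Require Import List Arith Lia Classical FunctionalExtensionality
  PropExtensionality ProofIrrelevance Eqdep ClassicalEpsilon.
Import ListNotations.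
Set Implicit Arguments.

Section Satisfaction.
Variable Sym : Type.

Lemma upd_eq {A} (e : nat -> A) x a : upd e x a x = a.
Proof. unfold upd; rewrite Nat.eqb_refl; reflexivity. Qed.

Lemma upd_neq {A} (e : nat -> A) x a y : y <> x -> upd e x a y = e y.
Proof. intro H; unfold upd; destruct (Nat.eqb_spec y x); congruence. Qed.

Lemma in_fv_FAll x (p : form Sym) y : In y (fv p) -> y <> x -> In y (fv (FAll x p)).
Proof.
  intros Hy Hyx; apply filter_In; split; [exact Hy|].
  now apply Bool.negb_true_iff, Nat.eqb_neq.
Qed.

Lemma sat_ext (M : structure Sym) p : forall e e',
  (forall y, In y (fv p) -> e y = e' y) -> (sat M e p <-> sat M e' p).
Proof.
  induction p as [R xs|x y| |p IHp q IHq|x p IHp]; simpl; intros e e' H.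
  - now rewrite (map_ext_in e e' xs) by auto.
  - now rewrite (H x), (H y) by auto.
  - tauto.
  - rewrite (IHp e e'), (IHq e e'); [tauto| |]; intros; apply H, in_or_app; auto.
  - assert (Hu : forall a y, In y (fv p) -> upd e x a y = upd e' x a y).
    { intros a y Hy; unfold upd; destruct (Nat.eqb_spec y x); auto.
      apply H, in_fv_FAll; auto. }
    split; intros Hs a; specialize (Hs a); specialize (IHp _ _ (Hu a)); tauto.
Qed.

Lemma holds_sat (M : structure Sym) p e : fv p = [] -> (holds M p <-> sat M e p).
Proof.
  intro Hf; split; [intro H; apply H|].
  intros Hs e'; apply (sat_ext M p e e'); [rewrite Hf; simpl; tauto | exact Hs].
Qed.

Lemma holds_or_holds_FNot (M : structure Sym) p :
  fv p = [] -> holds M p \/ holds M (FNot p).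
Proof.
  intro Hf; destruct (classic (sat M (fun _ => point M) p)) as [Hs|Hs].
  - left; exact (proj2 (holds_sat M p _ Hf) Hs).
  - right; intros e Hs'; apply Hs; exact (proj2 (holds_sat M p e Hf) Hs' _).
Qed.

Lemma sat_fold_FEx (M : structure Sym) body vs : forall e,
  sat M e (fold_right (fun x p => FEx x p) body vs) <->
  exists e', (forall y, ~ In y vs -> e' y = e y) /\ sat M e' body.
Proof.
  induction vs as [|x vs IH]; intro e; cbn [fold_right].
  - split; [intro; exists e; auto|].
    intros [e' [H1 H2]]. replace e with e'; auto.
    apply functional_extensionality; intro y; apply H1; auto.
  - unfold FEx, FNot; simpl. split.
    + intro H. apply NNPP; intro Hn; apply H; intros a Ha.
      apply IH in Ha; destruct Ha as [e' [H1 H2]]; apply Hn; exists e'; split; auto.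
      intros y Hy; rewrite H1 by (intro; apply Hy; simpl; auto).
      apply upd_neq; intro; subst; apply Hy; simpl; auto.
    + intros [e' [H1 H2]] Hall. apply (Hall (e' x)), IH. exists e'; split; auto.
      intros y Hy. destruct (Nat.eq_dec y x) as [->|Hyx].
      * now rewrite upd_eq.
      * rewrite upd_neq by auto; apply H1; simpl; intros [Hc|Hc]; [congruence|tauto].
Qed.

Lemma sat_fold_FAll (M : structure Sym) body vs : forall e,
  sat M e (fold_right (fun x p => FAll x p) body vs) <->
  forall e', (forall y, ~ In y vs -> e' y = e y) -> sat M e' body.
Proof.
  induction vs as [|x vs IH]; intro e; cbn [fold_right].
  - split; [|intro H; apply H; auto].
    intros H e' H1. replace e' with e; auto.
    apply functional_extensionality; intro y; symmetry; apply H1; auto.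
  - simpl. split.
    + intros H e' H1. specialize (H (e' x)). rewrite IH in H. apply H.
      intros y Hy. destruct (Nat.eq_dec y x) as [->|Hyx].
      * now rewrite upd_eq.
      * rewrite upd_neq by auto; apply H1; simpl; intros [Hc|Hc]; [congruence|tauto].
    + intros H a. apply IH. intros e' H1. apply H.
      intros y Hy. rewrite H1 by (intro; apply Hy; simpl; auto).
      apply upd_neq; intro; subst; apply Hy; simpl; auto.
Qed.

Lemma fv_fold_FEx body vs y :
  In y (fv (fold_right (fun x (p : form Sym) => FEx x p) body vs)) ->
  In y (fv body) /\ ~ In y vs.
Proof.
  induction vs as [|x vs IH]; cbn [fold_right]; [simpl; tauto|].
  unfold FEx, FNot; simpl; rewrite !app_nil_r; intro H. apply filter_In in H.
  destruct H as [H1 H2]. apply IH in H1. apply Bool.negb_true_iff, Nat.eqb_neq in H2.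
  split; [tauto|]. intros [|]; subst; tauto.
Qed.

Lemma fv_fold_FAll body vs y :
  In y (fv (fold_right (fun x (p : form Sym) => FAll x p) body vs)) ->
  In y (fv body) /\ ~ In y vs.
Proof.
  induction vs as [|x vs IH]; cbn [fold_right]; [simpl; tauto|].
  simpl; intro H. apply filter_In in H.
  destruct H as [H1 H2]. apply IH in H1. apply Bool.negb_true_iff, Nat.eqb_neq in H2.
  split; [tauto|]. intros [|]; subst; tauto.
Qed.

Lemma wf_fold_FEx ar L body vs :
  wf ar L body -> wf ar L (fold_right (fun x (p : form Sym) => FEx x p) body vs).
Proof. induction vs; cbn [fold_right]; auto. unfold FEx, FNot; simpl; tauto. Qed.

Lemma wf_fold_FAll ar L body vs :
  wf ar L body -> wf ar L (fold_right (fun x (p : form Sym) => FAll x p) body vs).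
Proof. induction vs; cbn [fold_right]; auto. Qed.

Lemma nil_of_no_member {A} (l : list A) : (forall y, ~ In y l) -> l = [].
Proof. destruct l as [|a l]; auto. intro H; exfalso; apply (H a); simpl; auto. Qed.

Fixpoint upd_list {A} (e : nat -> A) (s : nat) (xs : list A) : nat -> A :=
  match xs with [] => e | x :: xs => upd (upd_list e (S s) xs) s x end.

Lemma map_upd_list {A} (xs : list A) : forall (e : nat -> A) s,
  map (upd_list e s xs) (seq s (length xs)) = xs.
Proof.
  induction xs as [|x xs IH]; intros e s; simpl; auto.
  rewrite upd_eq; f_equal.
  transitivity (map (upd_list e (S s) xs) (seq (S s) (length xs))); [|apply IH].
  apply map_ext_in; intros a Ha; apply in_seq in Ha; apply upd_neq; lia.
Qed.

Lemma upd_list_out {A} (xs : list A) : forall (e : nat -> A) s y,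
  ~ In y (seq s (length xs)) -> upd_list e s xs y = e y.
Proof.
  induction xs as [|x xs IH]; intros e s y H; simpl; auto.
  simpl in H. rewrite upd_neq by (intro; apply H; auto). apply IH; intro; apply H; auto.
Qed.

Definition nonempty_in (ar : Sym -> nat) (M : structure Sym) (k : Sym) : Prop :=
  exists xs, length xs = ar k /\ interp M k xs.

Lemma holds_exR ar (M : structure Sym) R : holds M (exR ar R) <-> nonempty_in ar M R.
Proof.
  unfold exR, nonempty_in. split.
  - intro H. specialize (H (fun _ => point M)). apply sat_fold_FEx in H.
    destruct H as [e' [_ H]]. exists (map e' (seq 0 (ar R))).
    now rewrite length_map, length_seq.
  - intros [xs [Hl Hi]] e. apply sat_fold_FEx. exists (upd_list e 0 xs). split.
    + intros y Hy; apply upd_list_out; now rewrite Hl.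
    + simpl. now rewrite <- Hl, map_upd_list.
Qed.

Lemma holds_allnotR ar (M : structure Sym) R :
  holds M (allnotR ar R) <-> ~ nonempty_in ar M R.
Proof.
  unfold allnotR, nonempty_in. split.
  - intros H [xs [Hl Hi]]. specialize (H (fun _ => point M)). rewrite sat_fold_FAll in H.
    specialize (H (upd_list (fun _ => point M) 0 xs)). simpl in H.
    rewrite <- Hl, map_upd_list in H. apply H; auto.
    intros y Hy; exact (upd_list_out xs (fun _ => point M) 0 y Hy).
  - intros H e. apply sat_fold_FAll. intros e' _ Hi. apply H.
    exists (map e' (seq 0 (ar R))). now rewrite length_map, length_seq.
Qed.

Lemma sentence_exR ar (L : Sym -> Prop) R : L R -> sentence ar L (exR ar R).
Proof.
  intro H; split.
  - apply wf_fold_FEx; simpl; now rewrite length_seq.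
  - apply nil_of_no_member; intros y Hy; apply fv_fold_FEx in Hy; simpl in Hy; tauto.
Qed.

Lemma sentence_allnotR ar (L : Sym -> Prop) R : L R -> sentence ar L (allnotR ar R).
Proof.
  intro H; split.
  - apply wf_fold_FAll; simpl; now rewrite length_seq.
  - apply nil_of_no_member; intros y Hy; apply fv_fold_FAll in Hy; simpl in Hy.
    rewrite app_nil_r in Hy; tauto.
Qed.

End Satisfaction.

Section Symbols.
Variable Sym : Type.

Fixpoint symbols (p : form Sym) : list Sym :=
  match p with
  | FRel R _ => [R]
  | FEq _ _ | FBot => []
  | FImp p q => symbols p ++ symbols q
  | FAll _ p => symbols p
  end.

Lemma wf_sub ar (L L' : Sym -> Prop) p : subset L L' -> wf ar L p -> wf ar L' p.
Proof. intro H; induction p; simpl; intuition. Qed.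

Lemma sentence_sub ar (L L' : Sym -> Prop) p :
  subset L L' -> sentence ar L p -> sentence ar L' p.
Proof. intros H [Hw Hf]; split; [exact (wf_sub ar p H Hw) | exact Hf]. Qed.

Lemma wf_in_symbols ar (L : Sym -> Prop) p : wf ar L p -> forall R, In R (symbols p) -> L R.
Proof.
  induction p; simpl; intros Hw R0 Hin; try tauto.
  - destruct Hin as [<-|[]]; tauto.
  - apply in_app_or in Hin; destruct Hin; [apply (IHp1 (proj1 Hw))|apply (IHp2 (proj2 Hw))]; auto.
  - apply (IHp Hw); auto.
Qed.

Lemma wf_of_symbols ar (L L' : Sym -> Prop) p :
  wf ar L p -> (forall R, In R (symbols p) -> L' R) -> wf ar L' p.
Proof.
  induction p; simpl; intros Hw H; try tauto.
  - split; [apply H; auto | tauto].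
  - split; [apply IHp1|apply IHp2]; try tauto; intros; apply H, in_or_app; auto.
Qed.

Lemma sentence_FNot ar (L : Sym -> Prop) p : sentence ar L p -> sentence ar L (FNot p).
Proof. intros [Hw Hf]; split; simpl; [tauto | now rewrite Hf]. Qed.

Fixpoint restrict (L' : Sym -> Prop) (p : form Sym) : form Sym :=
  match p with
  | FRel R xs => if excluded_middle_informative (L' R) then FRel R xs else FBot
  | FEq x y => FEq x y
  | FBot => FBot
  | FImp p q => FImp (restrict L' p) (restrict L' q)
  | FAll x p => FAll x (restrict L' p)
  end.

Lemma fv_restrict L' p y : In y (fv (restrict L' p)) -> In y (fv p).
Proof.
  induction p; simpl; auto.
  - destruct (excluded_middle_informative (L' s)); simpl; tauto.
  - intro H; apply in_app_or in H; apply in_or_app; tauto.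
  - rewrite !filter_In; tauto.
Qed.

Lemma sentence_restrict ar (L L' : Sym -> Prop) p :
  sentence ar L p -> sentence ar L' (restrict L' p).
Proof.
  intros [Hw Hf]; split.
  - clear Hf; induction p; simpl in *; try tauto.
    destruct (excluded_middle_informative (L' s)); simpl; tauto.
  - apply nil_of_no_member; intros y Hy; apply fv_restrict in Hy; rewrite Hf in Hy; auto.
Qed.

Lemma sat_restrict ar (L L' : Sym -> Prop) (M : structure Sym) p :
  wf ar L p ->
  (forall R xs, L R -> ~ L' R -> length xs = ar R -> ~ interp M R xs) ->
  forall e, sat M e p <-> sat M e (restrict L' p).
Proof.
  intros Hw H; induction p; simpl in *; intro e; try tauto.
  - destruct (excluded_middle_informative (L' s)); simpl; [tauto|].
    split; [|tauto]. intro Hi; apply (H s (map e l)); try tauto. rewrite length_map; tauto.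
  - rewrite IHp1, IHp2 by tauto; tauto.
  - split; intros Hs a; specialize (Hs a); rewrite IHp in *; auto.
Qed.

Lemma sat_eta (M : structure Sym) e p :
  sat M e p <-> sat (Structure (carrier M) (point M) (interp M)) e p.
Proof. destruct M; reflexivity. Qed.

Lemma sat_interp_agree ar (L : Sym -> Prop) C pt (i1 i2 : Sym -> list C -> Prop) p :
  wf ar L p -> (forall R xs, L R -> length xs = ar R -> (i1 R xs <-> i2 R xs)) ->
  forall e, sat (Structure C pt i1) e p <-> sat (Structure C pt i2) e p.
Proof.
  intros Hw H; induction p; simpl in *; intro e; try tauto.
  - apply H; try tauto; rewrite length_map; tauto.
  - rewrite IHp1, IHp2 by tauto; tauto.
  - split; intros Hs a; specialize (Hs a); rewrite IHp in *; auto.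
Qed.

End Symbols.

Section Relativization.
Variable Sym : Type.

Fixpoint relativize (v : nat) (p : form Sym) : form (option Sym) :=
  match p with
  | FRel R xs => FRel (Some R) xs
  | FEq x y => FEq x y
  | FBot => FBot
  | FImp p q => FImp (relativize v p) (relativize v q)
  | FAll x p => FAll x (FImp (FRel None [v; x]) (relativize v p))
  end.

Fixpoint vars (p : form Sym) : list nat :=
  match p with
  | FRel _ xs => xs
  | FEq x y => [x; y]
  | FBot => []
  | FImp p q => vars p ++ vars q
  | FAll x p => x :: vars p
  end.

Lemma wf_relativize ar (L : Sym -> Prop) v p :
  wf ar L p -> wf (arE ar) (LE L) (relativize v p).
Proof. induction p; simpl; tauto. Qed.

Lemma fv_relativize v p y : In y (fv (relativize v p)) -> y = v \/ In y (fv p).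
Proof.
  induction p; cbn [relativize fv]; auto.
  - intro H; apply in_app_or in H; destruct H as [H|H];
      [destruct (IHp1 H)|destruct (IHp2 H)]; auto; right; apply in_or_app; auto.
  - rewrite !filter_In. intros [H1 H2]. apply in_app_or in H1. destruct H1 as [H1|H1].
    + simpl in H1. destruct H1 as [<-|[<-|[]]]; auto.
      apply Bool.negb_true_iff, Nat.eqb_neq in H2; tauto.
    + destruct (IHp H1); auto.
Qed.

Lemma upd_agree_fv {A B} (f : A -> B) (ec : nat -> A) (em : nat -> B) x c (p : form Sym) :
  (forall y, In y (fv (FAll x p)) -> em y = f (ec y)) ->
  forall y, In y (fv p) -> upd em x (f c) y = f (upd ec x c y).
Proof.
  intros Hc y Hy. destruct (Nat.eq_dec y x) as [->|Hyx].
  - now rewrite !upd_eq.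
  - rewrite !upd_neq by auto. apply Hc, in_fv_FAll; auto.
Qed.

Lemma sat_relativize_Eclass (M : structure (option Sym)) (a : carrier M)
  (h : interp M None [a; a]) v p :
  ~ In v (vars p) ->
  forall (ec : nat -> carrier (Eclass M a h)) (em : nat -> carrier M),
  em v = a -> (forall y, In y (fv p) -> em y = proj1_sig (ec y)) ->
  (sat (Eclass M a h) ec p <-> sat M em (relativize v p)).
Proof.
  induction p as [R xs|x y| |p IHp q IHq|x p IHp]; simpl; intros Hv ec em Hem Hc.
  - rewrite map_map, (map_ext_in em (fun x => proj1_sig (ec x)) xs) by auto; tauto.
  - rewrite (Hc x), (Hc y) by auto. split; [intros ->; auto|].
    destruct (ec x) as [x1 p1], (ec y) as [x2 p2]; simpl; intros <-.
    f_equal; apply proof_irrelevance.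
  - tauto.
  - rewrite (IHp ltac:(intro; apply Hv, in_or_app; auto) ec em Hem),
      (IHq ltac:(intro; apply Hv, in_or_app; auto) ec em Hem); [tauto| |];
      intros; apply Hc, in_or_app; auto.
  - assert (Hvx : v <> x) by (intro; apply Hv; auto).
    assert (Hv' : ~ In v (vars p)) by (intro; apply Hv; auto).
    split.
    + intros H c Hvc. rewrite upd_eq, upd_neq, Hem in Hvc by auto.
      apply (IHp Hv' (upd ec x (exist _ c Hvc))); [now rewrite upd_neq| |apply H].
      exact (upd_agree_fv (@proj1_sig _ _) ec em x (exist _ c Hvc) p Hc).
    + intros H [c Hvc]. specialize (H c). rewrite upd_eq, upd_neq, Hem in H by auto.
      apply (IHp Hv' (upd ec x (exist _ c Hvc)) (upd em x c)); [now rewrite upd_neq| |auto].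
      exact (upd_agree_fv (@proj1_sig _ _) ec em x (exist _ c Hvc) p Hc).
Qed.

Lemma map_existT_inj (J : Type) (P : J -> Type) (j : J) (l1 l2 : list (P j)) :
  map (existT P j) l1 = map (existT P j) l2 -> l1 = l2.
Proof.
  revert l2; induction l1; intros [|b l2]; simpl; intro H; try discriminate; auto.
  injection H; intros H1 H2. apply inj_pair2 in H2. f_equal; auto.
Qed.

Lemma interp_Ecomb_map_existT (J : Type) (A : J -> structure Sym) (j0 j : J) R
  (ys : list (carrier (A j))) :
  (ys = [] -> forall j', interp (A j') R [] -> interp (A j) R []) ->
  (interp (Ecomb A j0) (Some R) (map (existT _ j) ys) <-> interp (A j) R ys).
Proof.
  intro H0. split; [|intro Hi; exists j, ys; auto].
  intros [j' [ys' [Heq Hi]]]. destruct ys as [|y ys].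
  - destruct ys'; [exact (H0 eq_refl j' Hi) | discriminate].
  - destruct ys' as [|y' ys']; [discriminate|].
    injection Heq; intros _ Hh. apply (f_equal (@projT1 _ _)) in Hh. simpl in Hh. subst j'.
    apply (@map_existT_inj J (fun j => carrier (A j))) in Heq. now rewrite Heq.
Qed.

(** Nullary symbols are the only ones whose value in an [E]-combination is
    not local to a class, hence the uniformity hypothesis on them. *)
Lemma sat_relativize_Ecomb ar (L : Sym -> Prop) (J : Type) (A : J -> structure Sym)
  (j0 j : J) v p :
  ~ In v (vars p) -> wf ar L p ->
  (forall R, In R (symbols p) -> ar R = 0 ->
     forall j1 j2, interp (A j1) R [] -> interp (A j2) R []) ->
  forall (ec : nat -> carrier (A j)) (em : nat -> carrier (Ecomb A j0)),
  projT1 (em v) = j -> (forall y, In y (fv p) -> em y = existT _ j (ec y)) ->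
  (sat (A j) ec p <-> sat (Ecomb A j0) em (relativize v p)).
Proof.
  induction p as [R xs|x y| |p IHp q IHq|x p IHp]; simpl; intros Hv Hw H0 ec em Hem Hc.
  - rewrite (map_ext_in em (fun x => existT _ j (ec x)) xs) by auto.
    rewrite <- (map_map ec (existT (fun j => carrier (A j)) j)).
    symmetry; apply (interp_Ecomb_map_existT A j0).
    intros Hnil j' Hi. apply map_eq_nil in Hnil. subst xs.
    exact (H0 R (or_introl eq_refl) (eq_sym (proj2 Hw)) j' j Hi).
  - rewrite (Hc x), (Hc y) by auto.
    split; [intros ->; auto | intro Hh; apply inj_pair2 in Hh; auto].
  - tauto.
  - rewrite (IHp ltac:(intro; apply Hv, in_or_app; auto) (proj1 Hw)
                 ltac:(intros R HR; apply H0, in_or_app; auto) ec em Hem),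
      (IHq ltac:(intro; apply Hv, in_or_app; auto) (proj2 Hw)
                 ltac:(intros R HR; apply H0, in_or_app; auto) ec em Hem); [tauto| |];
      intros; apply Hc, in_or_app; auto.
  - assert (Hvx : v <> x) by (intro; apply Hv; auto).
    assert (Hv' : ~ In v (vars p)) by (intro; apply Hv; auto).
    split.
    + intros H [j' c] Hb. simpl in Hb. rewrite upd_eq, upd_neq in Hb by auto.
      simpl in Hb. rewrite Hem in Hb. subst j'.
      apply (IHp Hv' Hw H0 (upd ec x c)); [now rewrite upd_neq| |apply H].
      exact (upd_agree_fv (existT _ j) ec em x c p Hc).
    + intros H c. specialize (H (existT _ j c)).
      simpl in H; rewrite upd_eq, upd_neq in H by auto; simpl in H.
      specialize (H Hem).
      apply (IHp Hv' Hw H0 (upd ec x c) (upd em x (existT _ j c))); [now rewrite upd_neq| |auto].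
      exact (upd_agree_fv (existT _ j) ec em x c p Hc).
Qed.

End Relativization.

Definition FAnd {X} (p q : form X) : form X := FNot (FImp p (FNot q)).
Definition FTrue {X} : form X := FNot FBot.
Definition conjl {X} (l : list (form X)) : form X := fold_right FAnd FTrue l.

Section Connectives.
Variable X : Type.

Lemma sat_FAnd (M : structure X) e p q : sat M e (FAnd p q) <-> sat M e p /\ sat M e q.
Proof. unfold FAnd, FNot; simpl; tauto. Qed.

Lemma sat_FEx (M : structure X) e x p : sat M e (FEx x p) <-> exists c, sat M (upd e x c) p.
Proof.
  unfold FEx, FNot; simpl. split.
  - intro H; apply NNPP; intro Hn; apply H; intros c Hc; apply Hn; eauto.
  - intros [c Hc] H; exact (H c Hc).
Qed.

Lemma sat_conjl (M : structure X) e l : sat M e (conjl l) <-> forall q, In q l -> sat M e q.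
Proof.
  induction l as [|q l IH]; unfold conjl in *; cbn [fold_right] in *.
  - unfold FTrue, FNot; simpl; tauto.
  - rewrite sat_FAnd, IH. split.
    + intros [H1 H2] q' [<-|Hq]; auto.
    + intro H; split; [apply H; simpl; auto|intros q' Hq; apply H; simpl; auto].
Qed.

Lemma wf_conjl ar (L : X -> Prop) l : (forall q, In q l -> wf ar L q) -> wf ar L (conjl l).
Proof.
  induction l; unfold conjl in *; cbn [fold_right] in *; intro H.
  - unfold FTrue, FNot; simpl; tauto.
  - unfold FAnd, FNot; simpl in *; repeat split; auto.
Qed.

Lemma fv_FAnd (p q : form X) y : In y (fv (FAnd p q)) -> In y (fv p) \/ In y (fv q).
Proof. unfold FAnd, FNot; simpl; rewrite !app_nil_r; apply in_app_or. Qed.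

Lemma fv_FEx (p : form X) x y : In y (fv (FEx x p)) -> In y (fv p) /\ y <> x.
Proof.
  unfold FEx, FNot; simpl; rewrite !app_nil_r, filter_In.
  intros [Hy Hx]; split; [exact Hy|]. now apply Bool.negb_true_iff, Nat.eqb_neq in Hx.
Qed.

Lemma fv_conjl (l : list (form X)) y :
  In y (fv (conjl l)) -> exists q, In q l /\ In y (fv q).
Proof.
  induction l as [|q l IH]; unfold conjl in *; cbn [fold_right] in *.
  - unfold FTrue, FNot; simpl; tauto.
  - intro H; apply fv_FAnd in H; destruct H as [H|H]; [exists q; simpl; auto|].
    destruct (IH H) as [q' [? ?]]; exists q'; simpl; auto.
Qed.

End Connectives.

Lemma lift_sig {A} (P : A -> Prop) (ys : list A) : (forall y, In y ys -> P y) ->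
  exists zs : list (sig P), map (@proj1_sig _ _) zs = ys.
Proof.
  induction ys as [|y ys IH]; intro H.
  - exists []; auto.
  - destruct IH as [zs Hz]; [intros; apply H; simpl; auto|].
    exists (exist _ y (H y (or_introl eq_refl)) :: zs); simpl; f_equal; auto.
Qed.

Section ClassPatterns.
Variables (Sym : Type) (ar : Sym -> nat).

Definition class_nonempty (v : nat) (k : Sym) : form (option Sym) :=
  let ys := seq (S v) (ar k) in
  fold_right (fun x p => FEx x p)
    (FAnd (conjl (map (fun y => FRel None [v; y]) ys)) (FRel (Some k) ys)) ys.

Lemma sat_class_nonempty (M : structure (option Sym)) e v k :
  sat M e (class_nonempty v k) <->
  exists ys, length ys = ar k /\ (forall y, In y ys -> interp M None [e v; y]) /\
             interp M (Some k) ys.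
Proof.
  unfold class_nonempty. rewrite sat_fold_FEx. split.
  - intros [e' [Hag Hs]]. rewrite sat_FAnd, sat_conjl in Hs. destruct Hs as [H1 H2].
    exists (map e' (seq (S v) (ar k))). split; [now rewrite length_map, length_seq|].
    split; [|exact H2].
    intros y Hy. apply in_map_iff in Hy. destruct Hy as [i [<- Hi]].
    specialize (H1 (FRel None [v; i]) (in_map _ _ _ Hi)). simpl in H1.
    rewrite <- (Hag v); auto. rewrite in_seq; lia.
  - intros [ys [Hl [HE Hi]]]. exists (upd_list e (S v) ys). split.
    + intros y Hy; apply upd_list_out; now rewrite Hl.
    + assert (Hm : map (upd_list e (S v) ys) (seq (S v) (ar k)) = ys)
        by (rewrite <- Hl; apply map_upd_list).
      rewrite sat_FAnd, sat_conjl; split; [|simpl; now rewrite Hm].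
      intros q Hq. apply in_map_iff in Hq. destruct Hq as [i [<- Hi']]. simpl.
      rewrite (upd_list_out ys e (S v) v) by (rewrite in_seq; lia).
      apply HE. apply (in_map (upd_list e (S v) ys)) in Hi'. now rewrite Hm in Hi'.
Qed.

Lemma wf_class_nonempty (L : Sym -> Prop) v k : L k -> wf (arE ar) (LE L) (class_nonempty v k).
Proof.
  intro H. apply wf_fold_FEx. unfold FAnd, FNot; simpl. rewrite length_seq. repeat split; auto.
  apply wf_conjl. intros q Hq; apply in_map_iff in Hq; destruct Hq as [i [<- _]]; simpl; auto.
Qed.

Lemma fv_class_nonempty v k y : In y (fv (class_nonempty v k)) -> y = v.
Proof.
  unfold class_nonempty. intro H. apply fv_fold_FEx in H. destruct H as [H1 H2].
  apply fv_FAnd in H1. destruct H1 as [H1|H1]; [|simpl in H1; tauto].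
  apply fv_conjl in H1. destruct H1 as [q [Hq Hy]]. apply in_map_iff in Hq.
  destruct Hq as [i [<- Hi]]. simpl in Hy. destruct Hy as [<-|[<-|[]]]; tauto.
Qed.

Lemma sat_class_nonempty_Eclass (M : structure (option Sym)) (a : carrier M)
  (h : interp M None [a; a]) e v k :
  e v = a -> (sat M e (class_nonempty v k) <-> nonempty_in ar (Eclass M a h) k).
Proof.
  intro Hv. rewrite sat_class_nonempty, Hv. split.
  - intros [ys [Hl [HE Hi]]]. destruct (lift_sig _ ys HE) as [zs Hz].
    exists zs. split; [now rewrite <- Hl, <- Hz, length_map|]. simpl; now rewrite Hz.
  - intros [zs [Hl Hi]]. exists (map (@proj1_sig _ _) zs).
    split; [now rewrite length_map|]. split; [|exact Hi].
    intros y Hy; apply in_map_iff in Hy; destruct Hy as [[y' Hy'] [<- _]]; exact Hy'.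
Qed.

Lemma sat_class_nonempty_Ecomb_intro (J : Type) (A : J -> structure Sym) (j0 : J) e v k :
  nonempty_in ar (A (projT1 (e v))) k -> sat (Ecomb A j0) e (class_nonempty v k).
Proof.
  intros [ys [Hl Hi]]. apply sat_class_nonempty.
  exists (map (existT _ (projT1 (e v))) ys). split; [now rewrite length_map|split].
  - intros y Hy; apply in_map_iff in Hy; destruct Hy as [y' [<- _]]; reflexivity.
  - exists (projT1 (e v)), ys; auto.
Qed.

Lemma sat_class_nonempty_Ecomb_elim (J : Type) (A : J -> structure Sym) (j0 : J) e v k :
  ar k <> 0 -> sat (Ecomb A j0) e (class_nonempty v k) -> nonempty_in ar (A (projT1 (e v))) k.
Proof.
  intros Hk Hs. apply sat_class_nonempty in Hs. destruct Hs as [ys [Hl [HE [j [ys' [-> Hi]]]]]].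
  destruct ys' as [|y ys'']; [simpl in Hl; lia|].
  specialize (HE _ (or_introl eq_refl)). simpl in HE; rewrite HE.
  exists (y :: ys''); split; [now rewrite <- Hl, length_map | exact Hi].
Qed.

Definition class_pattern (v : nat) (P N : list Sym) (phi : form Sym) : form (option Sym) :=
  FEx v (FAnd (conjl (map (class_nonempty v) P))
           (FAnd (conjl (map (fun l => FNot (class_nonempty v l)) N)) (relativize v phi))).

Lemma sat_class_pattern (M : structure (option Sym)) e v P N phi :
  sat M e (class_pattern v P N phi) <->
  exists c, (forall k, In k P -> sat M (upd e v c) (class_nonempty v k)) /\
            (forall l, In l N -> ~ sat M (upd e v c) (class_nonempty v l)) /\
            sat M (upd e v c) (relativize v phi).
Proof.
  unfold class_pattern. rewrite sat_FEx.
  setoid_rewrite sat_FAnd; setoid_rewrite sat_FAnd; setoid_rewrite sat_conjl.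
  split; intros [c [H1 [H2 H3]]]; exists c; (split; [|split]); auto.
  - intros k Hk; apply H1, in_map, Hk.
  - intros l Hl; apply (H2 (FNot (class_nonempty v l))).
    exact (in_map (fun l => FNot (class_nonempty v l)) N l Hl).
  - intros q Hq; apply in_map_iff in Hq; destruct Hq as [k [<- Hk]]; auto.
  - intros q Hq; apply in_map_iff in Hq; destruct Hq as [l [<- Hl]]; exact (H2 l Hl).
Qed.

Lemma sentence_class_pattern (L : Sym -> Prop) v P N phi :
  (forall k, In k P -> L k) -> (forall l, In l N -> L l) ->
  sentence ar L phi -> sentence (arE ar) (LE L) (class_pattern v P N phi).
Proof.
  intros HP HN [Hw Hf]. split.
  - unfold class_pattern, FEx, FAnd, FNot; simpl. repeat split; auto.
    + apply wf_conjl; intros q Hq; apply in_map_iff in Hq; destruct Hq as [k [<- Hk]].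
      apply wf_class_nonempty, HP, Hk.
    + apply wf_conjl; intros q Hq; apply in_map_iff in Hq; destruct Hq as [l [<- Hl]].
      simpl; split; auto. apply wf_class_nonempty, HN, Hl.
    + apply wf_relativize, Hw.
  - apply nil_of_no_member; intros y Hy. apply fv_FEx in Hy. destruct Hy as [Hy Hyv]. apply Hyv.
    apply fv_FAnd in Hy. destruct Hy as [Hy|Hy]; [|apply fv_FAnd in Hy; destruct Hy as [Hy|Hy]].
    + apply fv_conjl in Hy; destruct Hy as [q [Hq Hy]]; apply in_map_iff in Hq.
      destruct Hq as [k [<- _]]; eapply fv_class_nonempty, Hy.
    + apply fv_conjl in Hy; destruct Hy as [q [Hq Hy]]; apply in_map_iff in Hq.
      destruct Hq as [l [<- _]]; simpl in Hy; rewrite app_nil_r in Hy.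
      eapply fv_class_nonempty, Hy.
    + apply fv_relativize in Hy; rewrite Hf in Hy; simpl in Hy; tauto.
Qed.

Definition fresh_var (phi : form Sym) : nat := S (list_max (vars phi)).

Lemma fresh_var_not_in phi : ~ In (fresh_var phi) (vars phi).
Proof.
  intro Hin. pose proof (proj1 (list_max_le (vars phi) _) (le_n _)) as Hmax.
  rewrite Forall_forall in Hmax. specialize (Hmax _ Hin). unfold fresh_var in Hmax; lia.
Qed.

(** The pattern is the single sentence [class_pattern]; it transfers to the
    [E]-combination, where a witness class is one component. *)
Lemma Eclass_pattern_in_component (L : Sym -> Prop) (J : Type) (A : J -> structure Sym)
  (j0 : J) (M : structure (option Sym)) (a : carrier M) (h : interp M None [a; a])
  (P N : list Sym) (phi : form Sym) :
  elem_equiv (arE ar) (LE L) M (Ecomb A j0) ->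
  (forall k, In k P -> L k /\ ar k <> 0) -> (forall l, In l N -> L l) ->
  sentence ar L phi ->
  (forall R, In R (symbols phi) -> ar R = 0 ->
     forall j1 j2, interp (A j1) R [] -> interp (A j2) R []) ->
  (forall k, In k P -> nonempty_in ar (Eclass M a h) k) ->
  (forall l, In l N -> ~ nonempty_in ar (Eclass M a h) l) ->
  holds (Eclass M a h) phi ->
  exists j, (forall k, In k P -> nonempty_in ar (A j) k) /\
            (forall l, In l N -> ~ nonempty_in ar (A j) l) /\ holds (A j) phi.
Proof.
  intros Heq HP HN Hphi H0 HPa HNa Ha.
  set (v := fresh_var phi). pose proof (fresh_var_not_in phi) as Hv. fold v in Hv.
  assert (Hf : fv phi = []) by apply Hphi.
  assert (HM : holds M (class_pattern v P N phi)).
  { intro e. apply sat_class_pattern. exists a. split; [|split].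
    - intros k Hk. apply (sat_class_nonempty_Eclass M h); [apply upd_eq | auto].
    - intros l Hl. rewrite (sat_class_nonempty_Eclass M h) by apply upd_eq. auto.
    - apply (sat_relativize_Eclass (h := h) v phi Hv (fun _ => exist _ a h));
        [apply upd_eq| |].
      + rewrite Hf; intros y [].
      + apply Ha. }
  apply Heq in HM; [|apply sentence_class_pattern; auto; intros k Hk; apply HP, Hk].
  specialize (HM (fun _ => existT _ j0 (point (A j0)))).
  apply sat_class_pattern in HM. destruct HM as [[j c] [HPj [HNj Hj]]].
  exists j. split; [|split].
  - intros k Hk. pose proof (HPj k Hk) as H.
    apply sat_class_nonempty_Ecomb_elim in H; [|apply HP, Hk]. now rewrite upd_eq in H.
  - intros l Hl Hne. apply (HNj l Hl), sat_class_nonempty_Ecomb_intro. rewrite upd_eq. exact Hne.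
  - apply (holds_sat (A j) phi (fun _ => c) Hf).
    apply (sat_relativize_Ecomb ar L (j0 := j0) v phi Hv (proj1 Hphi) H0 (fun _ => c)
             (upd (fun _ => existT _ j0 (point (A j0))) v (existT _ j c)));
      [now rewrite upd_eq | rewrite Hf; intros y [] | exact Hj].
Qed.

End ClassPatterns.

Section DiscreteChains.
Variable T : Type.

Definition chain (F : (T -> Prop) -> Prop) : Prop :=
  forall I1 I2, F I1 -> F I2 -> subset I1 I2 \/ subset I2 I1.

Definition strict_subset (A B : T -> Prop) : Prop := subset A B /\ exists m, B m /\ ~ A m.

Definition separates (U : T -> Prop) (G : (T -> Prop) -> Prop) (A : T -> Prop) : Prop :=
  forall k m, A k -> U m -> ~ A m -> exists K, G K /\ K k /\ ~ K m.

Definition covered_by (G : (T -> Prop) -> Prop) (A : T -> Prop) : Prop :=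
  forall k, A k -> exists K, G K /\ K k.

Lemma separates_sub U (G G' : (T -> Prop) -> Prop) A :
  subset G G' -> separates U G A -> separates U G' A.
Proof.
  intros HG Hsep k m Hk Hm Hnm. destruct (Hsep k m Hk Hm Hnm) as [K [HK HKkm]].
  exists K; split; [apply HG, HK | exact HKkm].
Qed.

Lemma covered_by_sub (G G' : (T -> Prop) -> Prop) A :
  subset G G' -> covered_by G A -> covered_by G' A.
Proof.
  intros HG Hcov k Hk. destruct (Hcov k Hk) as [K [HK HKk]].
  exists K; split; [apply HG, HK | exact HKk].
Qed.

Lemma chain_subset_of_witness {F I1 I2 m} :
  chain F -> F I1 -> F I2 -> I1 m -> ~ I2 m -> subset I2 I1.
Proof. intros Hch H1 H2 Hm Hnm. destruct (Hch I1 I2 H1 H2) as [H|H]; auto. now exfalso; auto. Qed.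

Lemma list_greatest (F : (T -> Prop) -> Prop) (R : (T -> Prop) -> (T -> Prop) -> Prop) :
  (forall X, R X X) -> (forall X Y Z, R X Y -> R Y Z -> R X Z) ->
  (forall X Y, F X -> F Y -> R X Y \/ R Y X) ->
  forall l, (exists Y, In Y l /\ F Y) ->
  exists Ym, F Ym /\ forall Y, In Y l -> F Y -> R Y Ym.
Proof.
  intros Hr Ht Hc l; induction l as [|Y l IH]; intros [Y0 [HY0 HG0]]; [destruct HY0|].
  destruct (classic (exists Y', In Y' l /\ F Y')) as [Hex|Hnex].
  - destruct (IH Hex) as [Ym [HGm Hm]].
    destruct (classic (F Y)) as [HGY|HGY].
    + destruct (Hc Y Ym HGY HGm) as [HR|HR].
      * exists Ym; split; auto. intros Z [<-|HZ] HGZ; auto.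
      * exists Y; split; auto. intros Z [<-|HZ] HGZ; eauto.
    + exists Ym; split; auto. intros Z [<-|HZ] HGZ; auto. contradiction.
  - assert (HGY : F Y) by (destruct HY0 as [<-|HY0]; auto; exfalso; eauto).
    exists Y; split; auto. intros Z [<-|HZ] HGZ; auto. exfalso; eauto.
Qed.

Section InDiscreteChain.
Variables (F : (T -> Prop) -> Prop) (I : T -> Prop).
Hypotheses (Hchain : chain F) (Hdisc : discrete F) (HI : F I).

Lemma discrete_not_union_below :
  (exists k, I k) -> ~ (forall k, I k -> exists K, F K /\ K k /\ strict_subset K I).
Proof.
  intros [k0 Hk0] Hcov.
  set (F' := fun K => F K /\ strict_subset K I).
  assert (Hsub : subset F' F) by (intros K [HK _]; exact HK).
  assert (Hinf : infinite F').
  { intros [l Hl]. destruct (list_greatest F' (@subset T)) with (l := l) as [Ym [HYm Hmax]].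
    - intros X x; auto.
    - intros X Y Z H1 H2 x Hx; auto.
    - intros X Y [HX _] [HY _]; apply Hchain; auto.
    - destruct (Hcov k0 Hk0) as [K [HK [_ HKI]]].
      assert (HK' : F' K) by (split; auto). exists K; auto.
    - destruct HYm as [_ [_ [m [Hm Hnm]]]]. apply Hnm.
      destruct (Hcov m Hm) as [K [HK [HKm HKI]]].
      assert (HK' : F' K) by (split; auto). exact (Hmax K (Hl K HK') HK' m HKm). }
  apply (Hdisc Hsub Hinf HI). left. split.
  - apply functional_extensionality; intro k; apply propositional_extensionality; split.
    + intro Hk; destruct (Hcov k Hk) as [K [HK [HKk HKI]]]; exists K; split; [split|]; auto.
    + intros [K [[_ [HKI _]] HKk]]; auto.
  - intros [_ [_ [m [Hm Hnm]]]]; auto.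
Qed.

Lemma discrete_not_intersection_above (U : T -> Prop) :
  (forall K, F K -> subset K U) ->
  (exists K, F K /\ strict_subset I K) ->
  ~ (forall l, U l -> ~ I l -> exists K, F K /\ strict_subset I K /\ ~ K l).
Proof.
  intros HU [K0 HK0] Hsep.
  set (F' := fun K => F K /\ strict_subset I K).
  assert (Hsub : subset F' F) by (intros K [HK _]; exact HK).
  assert (Hinf : infinite F').
  { intros [l Hl]. destruct (list_greatest F' (fun X Y => subset Y X)) with (l := l)
      as [Ym [HYm Hmin]].
    - intros X x; auto.
    - intros X Y Z H1 H2 x Hx; auto.
    - intros X Y [HX _] [HY _]; destruct (Hchain HX HY); auto.
    - exists K0; split; [apply Hl|]; exact HK0.
    - destruct HYm as [HFm [_ [m [Hm Hnm]]]].
      destruct (Hsep m (HU _ HFm m Hm) Hnm) as [K [HK [HIK HKm]]].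
      assert (HK' : F' K) by (split; auto). exact (HKm (Hmin K (Hl K HK') HK' m Hm)). }
  apply (Hdisc Hsub Hinf HI). right. split.
  - apply functional_extensionality; intro l; apply propositional_extensionality; split.
    + intros Hl K [_ [HIK _]]; auto.
    + intro Hl. apply NNPP; intro Hnl.
      destruct (Hsep l (HU K0 (proj1 HK0) l (Hl K0 HK0)) Hnl) as [K [HK [HIK HKl]]].
      apply HKl, Hl; split; auto.
  - intros [_ [_ [m [Hm Hnm]]]]; auto.
Qed.

Lemma discrete_chain_separated_mem (U : T -> Prop) (G : (T -> Prop) -> Prop) :
  (forall K, F K -> subset K U) -> (exists k, I k) ->
  (forall Q, G Q -> separates U F Q /\ covered_by F Q) ->
  separates U G I -> covered_by G I -> G I.
Proof.
  intros HU Hne HG HsepI HcovI. apply NNPP; intro HnI.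
  assert (Hout : forall Q, G Q -> ~ subset I Q -> exists m, I m /\ ~ Q m).
  { intros Q HQ Hsub. apply NNPP; intro Hn. apply Hsub; intros m Hm.
    apply NNPP; intro Hq; apply Hn; eauto. }
  destruct (classic (forall k, I k -> exists Q, G Q /\ Q k /\ subset Q I)) as [Hbelow|Habove].
  - apply (discrete_not_union_below Hne). intros k Hk.
    destruct (Hbelow k Hk) as [Q [HQ [HQk HQI]]].
    destruct (Hout Q HQ) as [m [Hm HQm]].
    { intro HIQ. apply HnI. replace I with Q; [exact HQ|].
      apply functional_extensionality; intro x; apply propositional_extensionality; split; auto. }
    destruct (proj1 (HG Q HQ) k m HQk (HU I HI m Hm) HQm) as [K [HK [HKk HKm]]].
    exists K; split; [exact HK|]; split; [exact HKk|].
    split; [exact (chain_subset_of_witness Hchain HI HK Hm HKm) | eauto].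
  - apply not_all_ex_not in Habove. destruct Habove as [k Habove].
    apply imply_to_and in Habove. destruct Habove as [Hk Habove].
    assert (Hexit : forall Q, G Q -> Q k -> exists m, Q m /\ ~ I m).
    { intros Q HQ HQk. apply NNPP; intro Hn. apply Habove. exists Q; split; [|split]; auto.
      intros m Hm; apply NNPP; intro Hi; apply Hn; eauto. }
    assert (Hlift : forall Q m, G Q -> Q m -> ~ I m -> forall K, F K -> K m -> strict_subset I K).
    { intros Q m HQ HQm Hm K HK HKm.
      split; [exact (chain_subset_of_witness Hchain HK HI HKm Hm) | eauto]. }
    apply (discrete_not_intersection_above HU).
    + destruct (HcovI k Hk) as [Q [HQ HQk]]. destruct (Hexit Q HQ HQk) as [m [HQm Hm]].
      destruct (proj2 (HG Q HQ) m HQm) as [K [HK HKm]].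
      exists K; split; [exact HK | exact (Hlift Q m HQ HQm Hm K HK HKm)].
    + intros l Hl Hnl. destruct (HsepI k l Hk Hl Hnl) as [Q [HQ [HQk HQl]]].
      destruct (Hexit Q HQ HQk) as [m [HQm Hm]].
      destruct (proj1 (HG Q HQ) m l HQm Hl HQl) as [K [HK [HKm HKl]]].
      exists K; split; [exact HK|]; split; [exact (Hlift Q m HQ HQm Hm K HK HKm) | exact HKl].
Qed.

End InDiscreteChain.
End DiscreteChains.

Section Theories.
Variables (Sym : Type) (ar : Sym -> nat).

Lemma Th_eq_holds_iff (L : Sym -> Prop) X Y p :
  Th ar L X = Th ar L Y -> sentence ar L p -> (holds X p <-> holds Y p).
Proof.
  intros HXY Hp. split; intro H.
  - assert (HX : Th ar L X p) by (split; auto). rewrite HXY in HX; apply HX.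
  - assert (HY : Th ar L Y p) by (split; auto). rewrite <- HXY in HY; apply HY.
Qed.

Lemma holds_of_Th_eq (L : Sym -> Prop) X (T : form Sym -> Prop) :
  Th ar L X = T -> forall p, T p -> holds X p.
Proof. intros <- p [_ Hp]; exact Hp. Qed.

Lemma nonempty_in_Th_eq (L : Sym -> Prop) X Y :
  Th ar L X = Th ar L Y -> forall k, L k -> (nonempty_in ar X k <-> nonempty_in ar Y k).
Proof.
  intros HXY k Hk. rewrite <- !holds_exR. apply (Th_eq_holds_iff HXY), sentence_exR, Hk.
Qed.

Lemma holds_Eclass_singleton (L : Sym -> Prop) (A : structure Sym) p h :
  sentence ar L p -> holds A p ->
  holds (Eclass (Ecomb (fun _ : unit => A) tt) (existT _ tt (point A)) h) p.
Proof.
  intros [Hw Hf] Hp.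
  set (v := fresh_var p). pose proof (fresh_var_not_in p) as Hv. fold v in Hv.
  set (E := Eclass (Ecomb (fun _ : unit => A) tt) (existT _ tt (point A)) h).
  apply (holds_sat E p (fun _ => exist _ (existT _ tt (point A)) h : carrier E) Hf).
  apply (sat_relativize_Eclass (h := h) v p Hv _ (fun _ => existT _ tt (point A)) eq_refl).
  { rewrite Hf; intros y []. }
  apply (sat_relativize_Ecomb ar L (A := fun _ => A) (j := tt) v p Hv Hw)
    with (ec := fun _ => point A).
  - intros R _ _ [] []; auto.
  - reflexivity.
  - rewrite Hf; intros y [].
  - apply Hp.
Qed.

End Theories.

Section Setting.
Variables (S : Type) (ar : S -> nat) (T0 : form S -> Prop) (n : nat) (M0 : structure S).
Hypothesis HT0 : T0 = Th ar (fun _ => True) M0.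
Hypothesis Hn : 1 <= n.

Notation I0s := (I0 ar T0 n).
Notation Sig := (Sigma' ar T0 n).

Lemma T0_iff (L : S -> Prop) p : sentence ar L p -> (T0 p <-> holds M0 p).
Proof.
  intro Hp; rewrite HT0; split; [intros [_ H]; exact H|].
  intro H; split; [apply (sentence_sub (L := L)); [intros x _; trivial | exact Hp] | exact H].
Qed.

Lemma models_M0_T0 : models M0 T0.
Proof. intros p Hp; rewrite HT0 in Hp; apply Hp. Qed.

Lemma T_I_of_T0 K p :
  T0 p -> sentence ar (L_I ar n K) p -> sentence ar Sig p -> T_I ar T0 n K p.
Proof. intros H1 H2 H3; split; [exact H3|]. intros N HN; apply HN; left; auto. Qed.

Lemma nonempty_in_T_I X K :
  Th ar Sig X = T_I ar T0 n K -> forall k, I0s k -> (nonempty_in ar X k <-> K k).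
Proof.
  intros HX k Hk. split.
  - intro Hne. apply NNPP; intro HK. apply (proj1 (holds_allnotR ar X k)); [|exact Hne].
    apply (holds_of_Th_eq HX). split; [apply sentence_allnotR; left; exact Hk|].
    intros N HN. apply HN. right. exists k. auto.
  - intro HK. apply holds_exR, (holds_of_Th_eq HX), T_I_of_T0;
      [| apply sentence_exR; left; exact HK | apply sentence_exR; left; exact Hk].
    destruct Hk as [_ Hne]. apply (T0_iff (L := fun _ => True)); [apply sentence_exR; trivial|].
    exact (Hne M0 models_M0_T0).
Qed.

Definition nonempty_syms (X : structure S) : S -> Prop :=
  fun k => I0s k /\ nonempty_in ar X k.

Lemma nonempty_syms_T_I X K :
  Th ar Sig X = T_I ar T0 n K -> subset K I0s -> nonempty_syms X = K.
Proof.
  intros HX HK. apply functional_extensionality; intro k; apply propositional_extensionality.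
  unfold nonempty_syms. split.
  - intros [Hk Hne]. exact (proj1 (nonempty_in_T_I HX Hk) Hne).
  - intro Hk. split; [exact (HK k Hk) | exact (proj2 (nonempty_in_T_I HX (HK k Hk)) Hk)].
Qed.

Lemma holds_T_I_of_M0 X K q :
  Th ar Sig X = T_I ar T0 n K -> sentence ar (fun s => ar s <> n) q -> holds M0 q -> holds X q.
Proof.
  intros HX Hq HM. apply (holds_of_Th_eq HX), T_I_of_T0.
  - exact (proj2 (T0_iff Hq) HM).
  - apply (sentence_sub (L := fun s => ar s <> n)); [intros s Hs; right; exact Hs | exact Hq].
  - apply (sentence_sub (L := fun s => ar s <> n)); [intros s Hs; right; exact Hs | exact Hq].
Qed.

Lemma nullary_T_I X K R :
  Th ar Sig X = T_I ar T0 n K -> ar R = 0 -> (interp X R [] <-> interp M0 R []).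
Proof.
  intros HX HR.
  assert (Hq : sentence ar (fun s => ar s <> n) (FRel R [])).
  { split; [simpl; split; [lia | now rewrite HR] | reflexivity]. }
  destruct (holds_or_holds_FNot M0 (FRel R []) eq_refl) as [HM|HM].
  - split; [intros _; exact (HM (fun _ => point M0))|].
    intros _. exact (holds_T_I_of_M0 HX Hq HM (fun _ => point X)).
  - split; [|intro H; exfalso; exact (HM (fun _ => point M0) H)].
    intro H. exfalso. exact (holds_T_I_of_M0 HX (sentence_FNot Hq) HM (fun _ => point X) H).
Qed.

Lemma Th_eq_T_I I X : models X (Ax_I ar T0 n I) -> Th ar Sig X = T_I ar T0 n I.
Proof.
  intro HX. apply functional_extensionality; intro p; apply propositional_extensionality.
  split; [|intros [Hs Hent]; split; [exact Hs | exact (Hent X HX)]].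
  intros [Hs Hh]. split; [exact Hs|].
  assert (Hempty : forall N, models N (Ax_I ar T0 n I) -> forall R xs,
            Sig R -> ~ L_I ar n I R -> length xs = ar R -> ~ interp N R xs).
  { intros N HN R xs HS HL Hl Hi.
    assert (HR : I0s R)
      by (destruct HS as [HS|HS]; [exact HS | exfalso; apply HL; right; exact HS]).
    assert (Hh' : holds N (allnotR ar R)).
    { apply HN. right. exists R.
      split; [exact HR|]. split; [|reflexivity]. intro; apply HL; left; auto. }
    apply holds_allnotR in Hh'. apply Hh'. exists xs; auto. }
  set (q := restrict (L_I ar n I) p).
  assert (Hq : sentence ar (L_I ar n I) q) by exact (sentence_restrict (L_I ar n I) Hs).
  assert (Hpq : forall N, models N (Ax_I ar T0 n I) -> forall e, sat N e p <-> sat N e q)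
    by (intros N HN; exact (sat_restrict ar Sig (L_I ar n I) N p (proj1 Hs) (Hempty N HN))).
  destruct (holds_or_holds_FNot M0 q (proj2 Hq)) as [HM|HM].
  - intros N HN e. apply (Hpq N HN). apply HN. left. split; [|exact Hq].
    exact (proj2 (T0_iff Hq) HM).
  - exfalso. assert (Hq' : sentence ar (L_I ar n I) (FNot q)) by exact (sentence_FNot Hq).
    assert (Hn' : holds X (FNot q))
      by (apply HX; left; split; [exact (proj2 (T0_iff Hq') HM) | exact Hq']).
    apply (Hn' (fun _ => point X)), (Hpq X HX), Hh.
Qed.

Definition restrict_model (I : S -> Prop) : structure S :=
  Structure (carrier M0) (point M0) (fun R xs => ~ (I0s R /\ ~ I R) /\ interp M0 R xs).

Lemma restrict_model_models I : models (restrict_model I) (Ax_I ar T0 n I).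
Proof.
  intros p [[HT Hs] | [l [Hl [HnI ->]]]].
  - intro e. apply models_M0_T0 in HT. specialize (HT e). rewrite sat_eta in HT.
    refine (proj1 (sat_interp_agree ar (L_I ar n I) (point M0) (interp M0) _ p (proj1 Hs) _ e) HT).
    intros R xs HL _. split; [|tauto]. intro Hi; split; [|exact Hi].
    intros [[Har _] HnIR]. destruct HL as [HL|HL]; auto.
  - apply holds_allnotR. intros [xs [_ [H _]]]. apply H; split; auto.
Qed.

Lemma Ax_I_sentence I p : Ax_I ar T0 n I p -> sentence ar (fun _ => True) p.
Proof.
  intros [[_ Hs]|[l [_ [_ ->]]]].
  - apply (sentence_sub (L := L_I ar n I)); [intros x _; trivial | exact Hs].
  - apply sentence_allnotR; trivial.
Qed.

Lemma T_F_sub_ClE (F : (S -> Prop) -> Prop) : subset (T_F ar T0 n F) (ClE ar Sig (T_F ar T0 n F)).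
Proof.
  intros T [I [HI ->]]. set (A := restrict_model I).
  assert (h : interp (Ecomb (fun _ : unit => A) tt) None
                [existT _ tt (point A); existT _ tt (point A)]) by reflexivity.
  exists (Ecomb (fun _ : unit => A) tt), unit, (fun _ => A), tt.
  split; [intros _; exists I; split; [exact HI | apply Th_eq_T_I, restrict_model_models]|].
  split; [intros p _; tauto|].
  exists (existT _ tt (point A)), h. symmetry. apply Th_eq_T_I.
  intros p Hp. apply (holds_Eclass_singleton (Ax_I_sentence Hp)), restrict_model_models, Hp.
Qed.

Lemma Eclass_finite_pattern (J : Type) (A : J -> structure S) (j0 : J)
  (M : structure (option S)) (a : carrier M) (h : interp M None [a; a]) (P N : list S) :
  elem_equiv (arE ar) (LE Sig) M (Ecomb A j0) ->
  (forall k, In k P -> nonempty_syms (Eclass M a h) k) ->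
  (forall l, In l N -> I0s l /\ ~ nonempty_syms (Eclass M a h) l) ->
  exists j, (forall k, In k P -> nonempty_syms (A j) k) /\
            (forall l, In l N -> ~ nonempty_syms (A j) l).
Proof.
  intros Heq HP HN.
  destruct (Eclass_pattern_in_component (L := Sig) (h := h) P N (phi := FTrue) Heq)
    as [j [HPj [HNj _]]].
  - intros k Hk. destruct (HP k Hk) as [[Har _] _]. split; [left; apply HP, Hk | lia].
  - intros l Hl. left; apply HN, Hl.
  - split; [simpl; tauto | reflexivity].
  - intros R [].
  - intros k Hk; apply HP, Hk.
  - intros l Hl Hne. destruct (HN l Hl) as [Hl0 Hnl]. apply Hnl; split; assumption.
  - intro e; simpl; auto.
  - exists j. split.
    + intros k Hk. split; [apply HP, Hk | apply HPj, Hk].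
    + intros l Hl [_ Hne]. exact (HNj l Hl Hne).
Qed.

Definition component_syms (J : Type) (A : J -> structure S) : (S -> Prop) -> Prop :=
  fun Q => exists j, Q = nonempty_syms (A j).

Lemma Eclass_separated (J : Type) (A : J -> structure S) (j0 : J)
  (M : structure (option S)) (a : carrier M) (h : interp M None [a; a]) :
  elem_equiv (arE ar) (LE Sig) M (Ecomb A j0) ->
  separates I0s (component_syms A) (nonempty_syms (Eclass M a h)) /\
  covered_by (component_syms A) (nonempty_syms (Eclass M a h)).
Proof.
  intro Heq. split.
  - intros k m Hk Hm Hnm.
    destruct (Eclass_finite_pattern (h := h) [k] [m] Heq) as [j [HPj HNj]].
    + intros k' [<-|[]]; exact Hk.
    + intros m' [<-|[]]; auto.
    + exists (nonempty_syms (A j)). split; [exists j; reflexivity|].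
      split; [apply HPj | apply HNj]; simpl; auto.
  - intros k Hk.
    destruct (Eclass_finite_pattern (h := h) [k] [] Heq) as [j [HPj _]].
    + intros k' [<-|[]]; exact Hk.
    + intros m' [].
    + exists (nonempty_syms (A j)). split; [exists j; reflexivity | apply HPj; simpl; auto].
Qed.

Lemma ClE_T_F_separated (F : (S -> Prop) -> Prop) X :
  (forall K, F K -> subset K I0s) ->
  ClE ar Sig (T_F ar T0 n F) (Th ar Sig X) ->
  separates I0s F (nonempty_syms X) /\ covered_by F (nonempty_syms X).
Proof.
  intros HF [M [J [A [j0 [HA [Heq [a [h HX]]]]]]]].
  assert (HXa : nonempty_syms X = nonempty_syms (Eclass M a h)).
  { apply functional_extensionality; intro k; apply propositional_extensionality.
    unfold nonempty_syms. split; intros [Hk Hne]; split; auto;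
      [rewrite <- (nonempty_in_Th_eq HX) | rewrite (nonempty_in_Th_eq HX)]; auto; left; auto. }
  assert (HAF : subset (component_syms A) F).
  { intros Q [j ->]. destruct (HA j) as [K [HK HjK]].
    rewrite (nonempty_syms_T_I HjK (HF K HK)). exact HK. }
  rewrite HXa. destruct (Eclass_separated a h Heq) as [Hsep Hcov].
  split; [exact (separates_sub HAF Hsep) | exact (covered_by_sub HAF Hcov)].
Qed.

Lemma holds_T0_of_T_I Y K p :
  Th ar Sig Y = T_I ar T0 n K -> T0 p -> sentence ar Sig p ->
  (forall R, In R (symbols p) -> ar R = n -> K R) -> holds Y p.
Proof.
  intros HY HT Hs HK. apply (holds_of_Th_eq HY), T_I_of_T0; [exact HT | | exact Hs].
  split; [|apply Hs]. apply (wf_of_symbols ar Sig (L_I ar n K) p (proj1 Hs)). intros R HR.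
  destruct (Nat.eq_dec (ar R) n) as [Har|Har]; [left; apply HK | right]; assumption.
Qed.

(** A theory of [Cl_E(T_F)] is [T_I] as soon as its nonempty [n]-ary symbols
    are those of [I]: a [T0]-sentence failing in it would fail in a component
    [T_K] of the combination, in which all its [n]-ary symbols are nonempty. *)
Lemma Th_eq_T_I_of_ClE (F : (S -> Prop) -> Prop) X I :
  subset I I0s -> ClE ar Sig (T_F ar T0 n F) (Th ar Sig X) ->
  nonempty_syms X = I -> Th ar Sig X = T_I ar T0 n I.
Proof.
  intros HI [M [J [A [j0 [HA [Heq [a [h HX]]]]]]]] HXI. apply Th_eq_T_I.
  intros p [[HT Hs] | [l [Hl [HnI ->]]]].
  2: { apply holds_allnotR. intro Hne. apply HnI. rewrite <- HXI. split; assumption. }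
  assert (HsS : sentence ar Sig p).
  { apply (sentence_sub (L := L_I ar n I)); [|exact Hs].
    intros R [HR|HR]; [left; apply HI, HR | right; exact HR]. }
  apply (Th_eq_holds_iff HX HsS).
  destruct (holds_or_holds_FNot (Eclass M a h) p (proj2 Hs)) as [Hp|Hnp]; [exact Hp | exfalso].
  set (P := filter (fun R => Nat.eqb (ar R) n) (symbols p)).
  assert (HP : forall k, In k P <-> In k (symbols p) /\ ar k = n).
  { intro k. unfold P. rewrite filter_In, Nat.eqb_eq. reflexivity. }
  assert (HPI : forall k, In k P -> I k).
  { intros k Hk. apply HP in Hk. destruct Hk as [Hk Har].
    destruct (wf_in_symbols ar (L_I ar n I) p (proj1 Hs) k Hk) as [HIk|Hnk];
      [exact HIk | contradiction]. }
  destruct (Eclass_pattern_in_component (L := Sig) (h := h) P [] (phi := FNot p) Heq)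
    as [j [HPj [_ Hj]]].
  - intros k Hk. split; [left; apply HI, HPI, Hk | apply HP in Hk; lia].
  - intros l [].
  - exact (sentence_FNot HsS).
  - intros R _ HR j1 j2 H1.
    destruct (HA j1) as [K1 [_ H1K]], (HA j2) as [K2 [_ H2K]].
    apply (nullary_T_I H2K HR), (nullary_T_I H1K HR), H1.
  - intros k Hk. rewrite <- (nonempty_in_Th_eq HX); [|left; apply HI, HPI, Hk].
    rewrite <- HXI in HPI. apply HPI, Hk.
  - intros l [].
  - exact Hnp.
  - destruct (HA j) as [K [_ HjK]].
    apply (Hj (fun _ => point (A j))), (holds_T0_of_T_I HjK HT HsS).
    intros R HR HRn. assert (HRP : In R P) by (apply HP; split; assumption).
    apply (nonempty_in_T_I HjK); [apply HI, HPI, HRP | apply HPj, HRP].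
Qed.

Lemma T_F_sub_generating (F : (S -> Prop) -> Prop) :
  chain F -> discrete F -> (forall I, F I -> index_set ar T0 n I) ->
  forall G, generating ar Sig (ClE ar Sig (T_F ar T0 n F)) G -> subset (T_F ar T0 n F) G.
Proof.
  intros Hchain Hdisc HFidx G [HGC HGeq] T [I [HI ->]].
  destruct (HFidx I HI) as [HI0 [HIinf _]].
  assert (HF : forall K, F K -> subset K I0s) by (intros K HK; apply (HFidx K HK)).
  destruct (proj2 (HGeq _) (T_F_sub_ClE (ex_intro _ I (conj HI eq_refl))))
    as [M [J [A [j0 [HA [Heq [a [h HX]]]]]]]].
  pose proof (nonempty_syms_T_I (eq_sym HX) HI0) as HXI.
  assert (Hmem : component_syms A I).
  { apply (discrete_chain_separated_mem Hchain Hdisc HI HF).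
    - apply NNPP; intro Hempty. apply HIinf. exists []. intros k Hk; apply Hempty; eauto.
    - intros Q [j ->]. exact (ClE_T_F_separated HF (HGC _ (HA j))).
    - rewrite <- HXI. exact (proj1 (Eclass_separated a h Heq)).
    - rewrite <- HXI. exact (proj2 (Eclass_separated a h Heq)). }
  destruct Hmem as [j Hj].
  rewrite <- (Th_eq_T_I_of_ClE HI0 (HGC _ (HA j)) (eq_sym Hj)). exact (HA j).
Qed.

End Setting.

Theorem proposition4p8 (S : Type) (ar : S -> nat) (T0 : form S -> Prop)
  (n : nat) :
  complete_theory ar (fun _ => True) T0 ->
  LU ar T0 ->
  1 <= n ->
  infinite (I0 ar T0 n) ->
  forall F : (S -> Prop) -> Prop,
    (forall I, F I -> index_set ar T0 n I) ->
    infinite F ->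
    (forall I1 I2, F I1 -> F I2 -> subset I1 I2 \/ subset I2 I1) ->
    (forall I1 I2, F I1 -> F I2 -> subset I1 I2 ->
       (exists k, I2 k /\ ~ I1 k) -> infinite (fun k => I2 k /\ ~ I1 k)) ->
    discrete F ->
    least_generating ar (Sigma' ar T0 n)
      (ClE ar (Sigma' ar T0 n) (T_F ar T0 n F)) (T_F ar T0 n F).
Proof.
  intros [M0 HT0] _ Hn _ F HFidx _ Hchain _ Hdisc.
  pose proof (T_F_sub_generating HT0 Hn Hchain Hdisc HFidx) as Hleast.
  split; [split|split].
  - exact (T_F_sub_ClE HT0 (F := F)).
  - intro T; reflexivity.
  - intros G _ [T [HT HnT]] HG. exact (HnT (Hleast G HG T HT)).
  - exact Hleast.
Qed.
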